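(* Let $S$ be an atom-simple Stone relation algebra with finitely many atoms, and let $C : S\to\mathbb{N}$ map each $x$ to the number of atoms below $x$. Assume that for all $x\in S$, $C(x)=0\iff x=\bot$, and that $C(\top)=C(1)^2$. Then $S$ is atomic and atom-rectangular, and hence $S$ is a representable relation algebra.
   Context: A Stone relation algebra is a structure $(S,\sqcup,\sqcap,\cdot,\overline{\,\cdot\,},{}^{\smile},\bot,\top,1)$ (write $xy$ for $x\cdot y$, $\overline{x}$ for the pseudocomplement, $x^{\smile}$ for the converse) such that: $(S,\sqcup,\sqcap,\bot,\top)$ is a bounded distributive lattice with order $x\sqsubseteq y\iff x\sqcup y=y$; $x\sqcap y=\bot\iff x\sqsubseteq\overline{y}$; $\overline{x}\sqcup\overline{\overline{x}}=\top$; $\cdot$ is associative with two-sided unit $1$, distributes over $\sqcup$ on both sides, and $\bot$ is a zero of $\cdot$; $x^{\smile\smile}=x$, $(xy)^{\smile}=y^{\smile}x^{\smile}$, $(x\sqcup y)^{\smile}=x^{\smile}\sqcup y^{\smile}$; $\overline{\overline{1}}=1$; $\overline{\overline{xy}}=\overline{\overline{x}}\,\overline{\overline{y}}$; $xy\sqcap z\sqsubseteq x(y\sqcap x^{\smile}z)$. A relation algebra is a Stone relation algebra with $\overline{\overline{x}}=x$ for all $x$; it is representable if it is isomorphic to an algebra of binary relations (on some base set) with the usual relational operations (union, intersection, complement, relational composition, converse, empty relation, greatest relation, identity). An atom is an element $x\neq\bot$ such that $\bot\neq y\sqsubseteq x$ implies $y=x$. An element $x$ is a rectangle if $x\top x\sqsubseteq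 x$ and simple if $\top x\top=\top$. $S$ is atomic if every $x\neq\bot$ has an atom below it; atom-rectangular if every atom is a rectangle; atom-simple if every atom is simple. *)

From Stdlib Require Import List.
Import ListNotations.

Record StoneRA := {
  car :> Type;
  sup : car -> car -> car;
  inf : car -> car -> car;
  comp : car -> car -> car;
  pc : car -> car;
  conv : car -> car;
  bot : car;
  top : car;
  one : car;
  sup_assoc : forall x y z, sup x (sup y z) = sup (sup x y) z;
  inf_assoc : forall x y z, inf x (inf y z) = inf (inf x y) z;
  sup_comm : forall x y, sup x y = sup y x;
  inf_comm : forall x y, inf x y = inf y x;
  sup_absorb : forall x y, sup x (inf x y) = x;
  inf_absorb : forall x y, inf x (sup x y) = x;
  inf_sup_distr : forall x y z, inf x (sup y z) = sup (inf x y) (inf x z);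
  sup_bot : forall x, sup x bot = x;
  inf_top : forall x, inf x top = x;
  pc_spec : forall x y, inf x y = bot <-> sup x (pc y) = pc y;
  stone : forall x, sup (pc x) (pc (pc x)) = top;
  comp_assoc : forall x y z, comp x (comp y z) = comp (comp x y) z;
  comp_one_l : forall x, comp one x = x;
  comp_one_r : forall x, comp x one = x;
  comp_sup_l : forall x y z, comp (sup x y) z = sup (comp x z) (comp y z);
  comp_sup_r : forall x y z, comp x (sup y z) = sup (comp x y) (comp x z);
  comp_bot_l : forall x, comp bot x = bot;
  comp_bot_r : forall x, comp x bot = bot;
  conv_invol : forall x, conv (conv x) = x;
  conv_comp : forall x y, conv (comp x y) = comp (conv y) (conv x);
  conv_sup : forall x y, conv (sup x y) = sup (conv x) (conv y);
  pc_pc_one : pc (pc one) = one;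
  pc_pc_comp : forall x y, pc (pc (comp x y)) = comp (pc (pc x)) (pc (pc y));
  dedekind : forall x y z,
    sup (inf (comp x y) z) (comp x (inf y (comp (conv x) z))) =
    comp x (inf y (comp (conv x) z))
}.

Section Notions.
Variable S : StoneRA.

Definition le (x y : S) : Prop := sup S x y = y.

Definition atom (x : S) : Prop :=
  x <> bot S /\ forall y : S, y <> bot S -> le y x -> y = x.

Definition rectangle (x : S) : Prop := le (comp S (comp S x (top S)) x) x.

Definition simple (x : S) : Prop := comp S (comp S (top S) x) (top S) = top S.

Definition atomic : Prop :=
  forall x : S, x <> bot S -> exists a, atom a /\ le a x.

Definition atom_rectangular : Prop := forall a : S, atom a -> rectangle a.

Definition atom_simple : Prop := forall a : S, atom a -> simple a.

Definition finitely_many_atoms : Prop :=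
  exists l : list S, NoDup l /\ forall a, In a l <-> atom a.

Definition num_atoms_below (x : S) (n : nat) : Prop :=
  exists l : list S, NoDup l /\ (forall a, In a l <-> (atom a /\ le a x)) /\ length l = n.

Definition relation_algebra : Prop := forall x : S, pc S (pc S x) = x.

(* Representability: an injective homomorphism into the algebra of all binary
   relations on some base set X (relations are X -> X -> Prop; equality of
   relations is extensional). *)
Definition representation (X : Type) (f : S -> X -> X -> Prop) : Prop :=
  (forall x y a b, f (sup S x y) a b <-> (f x a b \/ f y a b)) /\
  (forall x y a b, f (inf S x y) a b <-> (f x a b /\ f y a b)) /\
  (forall x a b, f (pc S x) a b <-> ~ f x a b) /\
  (forall x y a b, f (comp S x y) a b <-> exists c, f x a c /\ f y c b) /\
  (forall x a b, f (conv S x) a b <-> f x b a) /\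
  (forall a b, ~ f (bot S) a b) /\
  (forall a b, f (top S) a b) /\
  (forall a b, f (one S) a b <-> a = b) /\
  (forall x y, (forall a b, f x a b <-> f y a b) -> x = y).

Definition representable : Prop :=
  exists (X : Type) (f : S -> X -> X -> Prop), representation X f.

End Notions.

(** Let [n] be the number of subidentity atoms.  For subidentity atoms [p], [q]
    the [n * n] rectangles [p⋅⊤⋅q] are nonzero, because [p] and [q] are simple,
    and pairwise disjoint, because distinct subidentity atoms are.  As there are
    only [n * n] atoms, every atom lies below some [p⋅⊤⋅q] and no [p⋅⊤⋅q] lies
    above two atoms.  This forces [p⋅⊤⋅p = p], then [¬¬p = p], and makes each
    [p⋅⊤⋅q] the atom below it.  So all atoms are regular rectangles, [⊤] is the
    join of the atoms, every element is regular, and [x ↦ {(p, q) | p⋅⊤⋅q ≤ x}]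
    represents the algebra by relations on the set of subidentity atoms. *)
From Stdlib Require Import List FinFun Classical ClassicalEpsilon ProofIrrelevance.
Import ListNotations.

Lemma NoDup_list_prod {A B : Type} (l : list A) (l' : list B) :
  NoDup l -> NoDup l' -> NoDup (list_prod l l').
Proof.
  intros Hl Hl'. induction Hl as [|a l Ha _ IH]; simpl; [constructor|].
  apply NoDup_app; auto.
  - apply Injective_map_NoDup; [intros x y E; now injection E | exact Hl'].
  - intros [a' b] Hin Hin'. apply in_map_iff in Hin as [b' [E _]]. injection E as <- _.
    apply in_prod_iff in Hin' as [Ha' _]. contradiction.
Qed.

Section StoneRelationAlgebra.
Variable S : StoneRA.
Local Notation "x ⊔ y" := (sup S x y) (at level 50, left associativity).
Local Notation "x ⊓ y" := (inf S x y) (at level 40, left associativity).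
Local Notation "x ⋅ y" := (comp S x y) (at level 34, left associativity).
Local Notation "x ≤ y" := (le S x y) (at level 70).
Local Notation "x ˘" := (conv S x) (at level 20).
Local Notation "¬ x" := (pc S x) (at level 30, right associativity).
Local Notation "⊥" := (bot S).
Local Notation "⊤" := (top S).
Local Notation "𝟏" := (one S).

Lemma sup_idem x : x ⊔ x = x.
Proof. transitivity (x ⊔ (x ⊓ (x ⊔ x))); [now rewrite inf_absorb | apply sup_absorb]. Qed.

Lemma inf_idem x : x ⊓ x = x.
Proof. transitivity (x ⊓ (x ⊔ (x ⊓ x))); [now rewrite sup_absorb | apply inf_absorb]. Qed.

Lemma le_refl x : x ≤ x.
Proof. apply sup_idem. Qed.

Lemma le_antisym x y : x ≤ y -> y ≤ x -> x = y.
Proof. unfold le; intros H1 H2. rewrite <- H2, sup_comm; exact H1. Qed.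

Lemma le_trans x y z : x ≤ y -> y ≤ z -> x ≤ z.
Proof. unfold le; intros H1 H2. rewrite <- H2, sup_assoc, H1; reflexivity. Qed.

Lemma sup_ub_l x y : x ≤ x ⊔ y.
Proof. unfold le. rewrite sup_assoc, sup_idem; reflexivity. Qed.

Lemma sup_ub_r x y : y ≤ x ⊔ y.
Proof. rewrite sup_comm; apply sup_ub_l. Qed.

Lemma sup_lub x y z : x ≤ z -> y ≤ z -> x ⊔ y ≤ z.
Proof. unfold le; intros H1 H2. rewrite <- sup_assoc, H2, H1; reflexivity. Qed.

Lemma le_iff_inf_eq x y : x ≤ y <-> x ⊓ y = x.
Proof.
  unfold le; split; intro H.
  - rewrite <- H; apply inf_absorb.
  - rewrite <- H, sup_comm, inf_comm; apply sup_absorb.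
Qed.

Lemma inf_lb_l x y : x ⊓ y ≤ x.
Proof. apply le_iff_inf_eq. rewrite (inf_comm _ (x ⊓ y)), inf_assoc, inf_idem; reflexivity. Qed.

Lemma inf_lb_r x y : x ⊓ y ≤ y.
Proof. rewrite inf_comm; apply inf_lb_l. Qed.

Lemma inf_glb x y z : z ≤ x -> z ≤ y -> z ≤ x ⊓ y.
Proof. rewrite !le_iff_inf_eq; intros H1 H2. rewrite inf_assoc, H1, H2; reflexivity. Qed.

Lemma le_inf_iff x y z : z ≤ x ⊓ y <-> z ≤ x /\ z ≤ y.
Proof.
  split; [|intros [? ?]; now apply inf_glb].
  intro H; split; eapply le_trans; eauto using inf_lb_l, inf_lb_r.
Qed.

Lemma bot_le x : ⊥ ≤ x.
Proof. unfold le. rewrite sup_comm; apply sup_bot. Qed.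

Lemma le_top x : x ≤ ⊤.
Proof. apply le_iff_inf_eq, inf_top. Qed.

Lemma le_bot_eq x : x ≤ ⊥ -> x = ⊥.
Proof. intro H; apply le_antisym; auto using bot_le. Qed.

Lemma inf_bot x : x ⊓ ⊥ = ⊥.
Proof. apply le_bot_eq, inf_lb_r. Qed.

Lemma comp_mono_r x y y' : y ≤ y' -> x ⋅ y ≤ x ⋅ y'.
Proof. unfold le; intro H. rewrite <- comp_sup_r, H; reflexivity. Qed.

Lemma comp_mono_l x x' y : x ≤ x' -> x ⋅ y ≤ x' ⋅ y.
Proof. unfold le; intro H. rewrite <- comp_sup_l, H; reflexivity. Qed.

Lemma comp_mono x x' y y' : x ≤ x' -> y ≤ y' -> x ⋅ y ≤ x' ⋅ y'.
Proof. intros; eapply le_trans; [apply comp_mono_l | apply comp_mono_r]; eauto. Qed.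

Lemma conv_mono x y : x ≤ y -> x˘ ≤ y˘.
Proof. unfold le; intro H. rewrite <- conv_sup, H; reflexivity. Qed.

Lemma le_conv_iff x y : x ≤ y˘ <-> x˘ ≤ y.
Proof.
  split; intro H; apply conv_mono in H; rewrite conv_invol in H; exact H.
Qed.

Lemma conv_le_conv_iff x y : x˘ ≤ y˘ <-> x ≤ y.
Proof. rewrite le_conv_iff, conv_invol. reflexivity. Qed.

Lemma conv_top : ⊤˘ = ⊤.
Proof. apply le_antisym; [apply le_top | apply le_conv_iff, le_top]. Qed.

Lemma conv_one : 𝟏˘ = 𝟏.
Proof.
  transitivity ((𝟏˘ ⋅ 𝟏)˘);
    [now rewrite conv_comp, conv_invol, comp_one_r | now rewrite comp_one_r, conv_invol].
Qed.

Lemma conv_inf x y : (x ⊓ y)˘ = x˘ ⊓ y˘.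
Proof.
  apply le_antisym.
  - apply inf_glb; apply conv_mono; [apply inf_lb_l | apply inf_lb_r].
  - apply le_conv_iff. rewrite <- (conv_invol S x) at 2. rewrite <- (conv_invol S y) at 2.
    apply inf_glb; apply conv_mono; [apply inf_lb_l | apply inf_lb_r].
Qed.

Lemma pc_le_iff x y : x ≤ ¬y <-> x ⊓ y = ⊥.
Proof. split; apply pc_spec. Qed.

Lemma inf_pc x : x ⊓ ¬x = ⊥.
Proof. rewrite inf_comm; apply pc_le_iff, le_refl. Qed.

Lemma le_pcpc x : x ≤ ¬¬x.
Proof. apply pc_le_iff, inf_pc. Qed.

Lemma pc_anti x y : x ≤ y -> ¬y ≤ ¬x.
Proof.
  intro H; apply pc_le_iff, le_bot_eq.
  rewrite <- (inf_pc y), inf_comm. apply inf_glb; [eapply le_trans; [apply inf_lb_l | exact H] | apply inf_lb_r].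
Qed.

Lemma pcpc_top : ¬¬⊤ = ⊤.
Proof. apply le_antisym; [apply le_top | apply le_pcpc]. Qed.

Lemma sup_pc_regular x : ¬¬x = x -> x ⊔ ¬x = ⊤.
Proof. intro Hx. rewrite <- (stone S x), Hx. apply sup_comm. Qed.

Lemma dedekind_le x y z : x ⋅ y ⊓ z ≤ x ⋅ (y ⊓ x˘ ⋅ z).
Proof. apply dedekind. Qed.

Lemma dedekind_le_r x y z : x ⋅ y ⊓ z ≤ (x ⊓ z ⋅ y˘) ⋅ y.
Proof.
  apply conv_le_conv_iff. rewrite conv_inf, !conv_comp, conv_inf, conv_comp, conv_invol.
  generalize (dedekind_le (y˘) (x˘) (z˘)). now rewrite conv_invol.
Qed.

Lemma comp_subid_l_le p x : p ≤ 𝟏 -> p ⋅ x ≤ x.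
Proof. intro Hp. rewrite <- (comp_one_l S x) at 2. now apply comp_mono_l. Qed.

Lemma comp_subid_r_le p x : p ≤ 𝟏 -> x ⋅ p ≤ x.
Proof. intro Hp. rewrite <- (comp_one_r S x) at 2. now apply comp_mono_r. Qed.

Lemma subid_conv_le p : p ≤ 𝟏 -> p˘ ≤ 𝟏.
Proof. intro Hp. rewrite <- conv_one; now apply conv_mono. Qed.

Lemma subid_le_conv p : p ≤ 𝟏 -> p ≤ p˘.
Proof.
  intro Hp. apply le_trans with (p ⋅ 𝟏 ⊓ p).
  { rewrite comp_one_r. apply inf_glb; apply le_refl. }
  eapply le_trans; [apply dedekind_le|]. eapply le_trans; [apply comp_mono_r, inf_lb_r|].
  eapply le_trans; [apply comp_subid_l_le, Hp|]. apply comp_subid_r_le, Hp.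
Qed.

Lemma subid_conv p : p ≤ 𝟏 -> p˘ = p.
Proof.
  intro Hp. apply le_antisym; [|now apply subid_le_conv].
  rewrite <- (conv_invol S p) at 2. apply subid_le_conv, subid_conv_le, Hp.
Qed.

Lemma subid_comp_l_id p x : p ≤ 𝟏 -> x ≤ p ⋅ ⊤ -> p ⋅ x = x.
Proof.
  intros Hp Hx. apply le_antisym; [now apply comp_subid_l_le|].
  apply le_trans with (p ⋅ ⊤ ⊓ x); [apply inf_glb; [exact Hx | apply le_refl]|].
  eapply le_trans; [apply dedekind_le|]. apply comp_mono_r.
  eapply le_trans; [apply inf_lb_r|]. now apply comp_subid_l_le, subid_conv_le.
Qed.

Lemma subid_comp_r_id p x : p ≤ 𝟏 -> x ≤ ⊤ ⋅ p -> x ⋅ p = x.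
Proof.
  intros Hp Hx. apply le_antisym; [now apply comp_subid_r_le|].
  apply le_trans with (⊤ ⋅ p ⊓ x); [apply inf_glb; [exact Hx | apply le_refl]|].
  eapply le_trans; [apply dedekind_le_r|]. apply comp_mono_l.
  eapply le_trans; [apply inf_lb_r|]. now apply comp_subid_r_le, subid_conv_le.
Qed.

Lemma subid_idem p : p ≤ 𝟏 -> p ⋅ p = p.
Proof.
  intro Hp. apply subid_comp_l_id; [exact Hp|].
  rewrite <- (comp_one_r S p) at 1. apply comp_mono_r, le_top.
Qed.

Lemma subid_comp_le_inf p q : p ≤ 𝟏 -> q ≤ 𝟏 -> p ⋅ q ≤ p ⊓ q.
Proof. intros; apply inf_glb; [now apply comp_subid_r_le | now apply comp_subid_l_le]. Qed.

Lemma subid_comp_top_inf_one_l p : p ≤ 𝟏 -> p ⋅ ⊤ ⊓ 𝟏 ≤ p.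
Proof.
  intro Hp. eapply le_trans; [apply dedekind_le|]. eapply le_trans; [apply comp_mono_r, inf_lb_r|].
  rewrite comp_one_r. apply comp_subid_r_le, subid_conv_le, Hp.
Qed.

Lemma subid_comp_top_inf_one_r p : p ≤ 𝟏 -> ⊤ ⋅ p ⊓ 𝟏 ≤ p.
Proof.
  intro Hp. eapply le_trans; [apply dedekind_le_r|]. eapply le_trans; [apply comp_mono_l, inf_lb_r|].
  rewrite comp_one_l. apply comp_subid_l_le, subid_conv_le, Hp.
Qed.

Lemma subid_rect_conv p q : p ≤ 𝟏 -> q ≤ 𝟏 -> (p ⋅ ⊤ ⋅ q)˘ = q ⋅ ⊤ ⋅ p.
Proof. intros Hp Hq. rewrite !conv_comp, conv_top, !subid_conv, comp_assoc; auto. Qed.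

Lemma subid_comp_l_disjoint p p' x y : p ≤ 𝟏 -> p' ≤ 𝟏 -> p ⊓ p' = ⊥ -> p ⋅ x ⊓ p' ⋅ y = ⊥.
Proof.
  intros Hp Hp' D. set (z := p ⋅ x ⊓ p' ⋅ y).
  assert (Hz : z ≤ p ⋅ ⊤) by (eapply le_trans; [apply inf_lb_l | apply comp_mono_r, le_top]).
  assert (Hz' : z ≤ p' ⋅ ⊤) by (eapply le_trans; [apply inf_lb_r | apply comp_mono_r, le_top]).
  apply le_bot_eq.
  rewrite <- (subid_comp_l_id p z Hp Hz), <- (subid_comp_l_id p' z Hp' Hz'), comp_assoc.
  eapply le_trans; [apply comp_mono_l, subid_comp_le_inf; auto|].
  rewrite D, comp_bot_l. apply le_refl.
Qed.

Lemma subid_comp_r_disjoint q q' x y : q ≤ 𝟏 -> q' ≤ 𝟏 -> q ⊓ q' = ⊥ -> x ⋅ q ⊓ y ⋅ q' = ⊥.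
Proof.
  intros Hq Hq' D. set (z := x ⋅ q ⊓ y ⋅ q').
  assert (Hz : z ≤ ⊤ ⋅ q) by (eapply le_trans; [apply inf_lb_l | apply comp_mono_l, le_top]).
  assert (Hz' : z ≤ ⊤ ⋅ q') by (eapply le_trans; [apply inf_lb_r | apply comp_mono_l, le_top]).
  apply le_bot_eq.
  rewrite <- (subid_comp_r_id q z Hq Hz), <- (subid_comp_r_id q' z Hq' Hz'), <- comp_assoc.
  eapply le_trans; [apply comp_mono_r, subid_comp_le_inf; auto|].
  rewrite (inf_comm S q' q), D, comp_bot_r. apply le_refl.
Qed.

Lemma rect_neq_bot p q : p <> ⊥ -> simple S p -> simple S q -> p ⋅ ⊤ ⋅ q <> ⊥.
Proof.
  intros Hp Sp Sq E. apply Hp, le_bot_eq.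
  assert (T : ⊤ ⋅ (p ⋅ ⊤ ⋅ q) ⋅ ⊤ = ⊤) by (rewrite !comp_assoc, Sp; exact Sq).
  rewrite E, comp_bot_r, comp_bot_l in T. rewrite T. apply le_top.
Qed.

Lemma atom_not_le_bot a : atom S a -> ~ a ≤ ⊥.
Proof. intros Ha H. apply (proj1 Ha), le_bot_eq, H. Qed.

Lemma atom_inf_eq_bot_or_le a x : atom S a -> a ⊓ x = ⊥ \/ a ≤ x.
Proof.
  intros [_ Hmin]. destruct (classic (a ⊓ x = ⊥)) as [E|E]; [now left | right].
  apply le_iff_inf_eq, Hmin; [exact E | apply inf_lb_l].
Qed.

Lemma atom_le_sup_iff a x y : atom S a -> a ≤ x ⊔ y <-> a ≤ x \/ a ≤ y.
Proof.
  intro Ha. split.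
  - intro H. destruct (atom_inf_eq_bot_or_le a x Ha) as [Hx|Hx]; [|now left].
    destruct (atom_inf_eq_bot_or_le a y Ha) as [Hy|Hy]; [exfalso|now right].
    apply (proj1 Ha). apply le_iff_inf_eq in H. now rewrite inf_sup_distr, Hx, Hy, sup_bot in H.
  - intros [H|H]; eapply le_trans; eauto using sup_ub_l, sup_ub_r.
Qed.

Lemma atom_le_pc_iff a x : atom S a -> a ≤ ¬x <-> ~ a ≤ x.
Proof.
  intro Ha. split.
  - intros H1 H2. apply (atom_not_le_bot a Ha). rewrite <- (inf_pc x). now apply inf_glb.
  - intro H. destruct (atom_inf_eq_bot_or_le a x Ha) as [E|E]; [now apply pc_le_iff | contradiction].
Qed.

Lemma atoms_disjoint a b : atom S a -> atom S b -> a <> b -> a ⊓ b = ⊥.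
Proof.
  intros Ha Hb Hab. destruct (atom_inf_eq_bot_or_le a b Ha) as [E|E]; [exact E|].
  exfalso. apply Hab, (proj2 Hb); [apply Ha | exact E].
Qed.

Fixpoint join (l : list S) : S :=
  match l with
  | [] => ⊥
  | a :: l => a ⊔ join l
  end.

Lemma le_join a l : In a l -> a ≤ join l.
Proof.
  induction l as [|b l IH]; simpl; [tauto|]. intros [<-|H]; [apply sup_ub_l|].
  eapply le_trans; [apply IH, H | apply sup_ub_r].
Qed.

Lemma inf_join_le x y l : (forall a, In a l -> x ⊓ a ≤ y) -> x ⊓ join l ≤ y.
Proof.
  induction l as [|b l IH]; simpl; intro H.
  - rewrite inf_bot; apply bot_le.
  - rewrite inf_sup_distr. apply sup_lub; auto.
Qed.

Lemma atom_le_comp_join a x y l : atom S a -> a ≤ x ⋅ join l ⋅ y -> exists c, In c l /\ a ≤ x ⋅ c ⋅ y.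
Proof.
  intro Ha. induction l as [|c l IH]; simpl; intro H.
  - rewrite comp_bot_r, comp_bot_l in H. exfalso; exact (atom_not_le_bot a Ha H).
  - rewrite comp_sup_r, comp_sup_l in H. apply (atom_le_sup_iff a _ _ Ha) in H as [H|H].
    + exists c. split; [now left | exact H].
    + destruct (IH H) as [c' [Hc' Hac']]. exists c'. split; [now right | exact Hac'].
Qed.

Lemma top_le_join_sup_lb_pc l : (forall a, In a l -> ¬¬a = a) ->
  exists z, (forall a, In a l -> z ≤ ¬a) /\ ⊤ ≤ join l ⊔ z.
Proof.
  induction l as [|a l IH]; simpl; intro Hreg.
  - exists ⊤. split; [tauto | apply sup_ub_r].
  - destruct IH as [z [Hz Htop]]; [auto|].
    exists (¬a ⊓ z). split.
    + intros b [<-|Hb]; [apply inf_lb_l | eapply le_trans; [apply inf_lb_r | auto]].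
    + eapply le_trans; [exact Htop|]. apply sup_lub.
      * eapply le_trans; [apply sup_ub_r | apply sup_ub_l].
      * apply le_trans with (z ⊓ (a ⊔ ¬a)).
        { rewrite sup_pc_regular, inf_top; [apply le_refl | auto]. }
        rewrite inf_sup_distr. apply sup_lub.
        -- eapply le_trans; [apply inf_lb_r|]. eapply le_trans; apply sup_ub_l.
        -- eapply le_trans; [|apply sup_ub_r]. rewrite inf_comm. apply le_refl.
Qed.

Section FinitelyManyAtoms.
Variables P L : list S.
Hypothesis Hsimple : atom_simple S.
Hypothesis Hatomic : atomic S.
Hypothesis HP : forall p, In p P <-> atom S p /\ p ≤ 𝟏.
Hypothesis HPnd : NoDup P.
Hypothesis HL : forall a, In a L <-> atom S a.
Hypothesis HLlen : length L = length P * length P.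

Lemma in_P_subid p : In p P -> p ≤ 𝟏.
Proof. intro H; apply HP, H. Qed.

Lemma in_P_atom p : In p P -> atom S p.
Proof. intro H; apply HP, H. Qed.

Lemma rect_has_atom p q : In p P -> In q P -> exists b, atom S b /\ b ≤ p ⋅ ⊤ ⋅ q.
Proof.
  intros Hp Hq. apply Hatomic, rect_neq_bot; [apply (in_P_atom p Hp) | apply Hsimple, in_P_atom ..];
    assumption.
Qed.

Lemma rect_disjoint p q p' q' : In p P -> In q P -> In p' P -> In q' P -> (p, q) <> (p', q') ->
  p ⋅ ⊤ ⋅ q ⊓ p' ⋅ ⊤ ⋅ q' = ⊥.
Proof.
  intros Hp Hq Hp' Hq' Hne. destruct (classic (p = p')) as [<-|E].
  - apply subid_comp_r_disjoint; auto using in_P_subid.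
    apply atoms_disjoint; auto using in_P_atom. congruence.
  - rewrite <- !comp_assoc. apply subid_comp_l_disjoint; auto using in_P_subid, in_P_atom, atoms_disjoint.
Qed.

Definition atom_below (p q : S) : S :=
  epsilon (inhabits ⊥) (fun b => atom S b /\ b ≤ p ⋅ ⊤ ⋅ q).

Lemma atom_below_spec p q : In p P -> In q P -> atom S (atom_below p q) /\ atom_below p q ≤ p ⋅ ⊤ ⋅ q.
Proof. intros Hp Hq. unfold atom_below. apply epsilon_spec, rect_has_atom; auto. Qed.

Lemma atom_is_atom_below a : atom S a -> exists p q, In p P /\ In q P /\ a = atom_below p q.
Proof.
  intro Ha.
  set (l := map (fun pq => atom_below (fst pq) (snd pq)) (list_prod P P)).
  assert (Hnd : NoDup l).
  { apply Injective_map_NoDup_in; [|now apply NoDup_list_prod].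
    intros [p q] [p' q'] Hpq Hpq' E; simpl in E.
    apply in_prod_iff in Hpq as [Hp Hq], Hpq' as [Hp' Hq'].
    apply NNPP; intro Hne.
    destruct (atom_below_spec p q Hp Hq) as [Hb H1], (atom_below_spec p' q' Hp' Hq') as [_ H2].
    apply (atom_not_le_bot _ Hb). rewrite <- (rect_disjoint p q p' q'); auto.
    apply inf_glb; [exact H1 | rewrite E; exact H2]. }
  assert (Hincl : incl L l).
  { apply NoDup_length_incl; [exact Hnd | |].
    - unfold l. rewrite length_map, length_prod, HLlen. apply le_n.
    - intros b Hb. apply in_map_iff in Hb as [[p q] [<- Hpq]]. apply in_prod_iff in Hpq as [Hp Hq].
      apply HL, atom_below_spec; auto. }
  apply HL, Hincl, in_map_iff in Ha as [[p q] [E Hpq]]. apply in_prod_iff in Hpq as [Hp Hq].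
  now exists p, q.
Qed.

Lemma atom_le_rect_unique p q b b' : In p P -> In q P -> atom S b -> atom S b' ->
  b ≤ p ⋅ ⊤ ⋅ q -> b' ≤ p ⋅ ⊤ ⋅ q -> b = b'.
Proof.
  intros Hp Hq.
  assert (Hchosen : forall c, atom S c -> c ≤ p ⋅ ⊤ ⋅ q -> c = atom_below p q).
  { intros c Hc Hcle. destruct (atom_is_atom_below c Hc) as [p' [q' [Hp' [Hq' ->]]]].
    destruct (classic ((p', q') = (p, q))) as [E|Hne]; [now injection E as -> ->|].
    exfalso. apply (atom_not_le_bot _ Hc). rewrite <- (rect_disjoint p' q' p q); auto.
    apply inf_glb; [apply atom_below_spec | exact Hcle]; auto. }
  intros Hb Hb' H H'. now rewrite (Hchosen b), (Hchosen b').
Qed.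

Lemma rect_diag p : In p P -> p ⋅ ⊤ ⋅ p = p.
Proof.
  intro Hp. pose proof (in_P_subid p Hp) as Hp1. pose proof (in_P_atom p Hp) as Hpa.
  assert (Hle : p ≤ p ⋅ ⊤ ⋅ p).
  { rewrite <- (subid_idem p Hp1) at 1. rewrite <- (comp_one_r S p) at 1.
    apply comp_mono_l, comp_mono_r, le_top. }
  apply le_antisym; [|exact Hle].
  assert (Hpc : p ⋅ ⊤ ⋅ p ⊓ ¬p = ⊥).
  { apply NNPP; intro E. destruct (Hatomic _ E) as [b [Hb Hble]].
    apply le_inf_iff in Hble as [Hb1 Hb2].
    rewrite (atom_le_rect_unique p p b p Hp Hp Hb Hpa Hb1 Hle) in Hb2.
    apply (atom_not_le_bot p Hpa). rewrite <- (inf_pc p). apply inf_glb; [apply le_refl | exact Hb2]. }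
  apply le_trans with (p ⋅ ⊤ ⊓ 𝟏); [|now apply subid_comp_top_inf_one_l].
  apply inf_glb; [now apply comp_subid_r_le|].
  apply le_trans with (¬¬p); [now apply pc_le_iff|].
  rewrite <- (pc_pc_one S). now do 2 apply pc_anti.
Qed.

Lemma subid_atom_regular p : In p P -> ¬¬p = p.
Proof.
  intro Hp. pose proof (in_P_subid p Hp) as Hp1.
  set (r := ¬¬p).
  assert (Hr1 : r ≤ 𝟏) by (rewrite <- (pc_pc_one S); now do 2 apply pc_anti).
  assert (Hrr : r ⋅ ⊤ ⋅ r = r) by (unfold r; rewrite <- pcpc_top, <- !pc_pc_comp, rect_diag; auto).
  assert (Hpr : p ⋅ ⊤ ⋅ r ≤ p).
  { eapply le_trans; [|now apply subid_comp_top_inf_one_l].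
    apply inf_glb; [now apply comp_subid_r_le|].
    apply le_trans with (r ⋅ ⊤ ⋅ r); [apply comp_mono_l, comp_mono_l, le_pcpc | rewrite Hrr; exact Hr1]. }
  assert (Hrp : r ⋅ ⊤ ⋅ p ≤ p).
  { rewrite <- (subid_rect_conv p r Hp1 Hr1), <- le_conv_iff, subid_conv; auto. }
  apply le_antisym; [|apply le_pcpc].
  rewrite <- Hrr, <- (Hsimple p (in_P_atom p Hp)).
  apply le_trans with (r ⋅ ⊤ ⋅ p ⋅ (⊤ ⋅ r)); [rewrite !comp_assoc; apply le_refl|].
  eapply le_trans; [apply comp_mono_l, Hrp|]. rewrite comp_assoc. exact Hpr.
Qed.

Lemma atom_le_rect_eq a p q : In p P -> In q P -> atom S a -> a ≤ p ⋅ ⊤ ⋅ q -> a = p ⋅ ⊤ ⋅ q.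
Proof.
  intros Hp Hq Ha H. pose proof (in_P_subid p Hp) as Hp1. pose proof (in_P_subid q Hq) as Hq1.
  assert (Hl : p ⋅ a = a).
  { apply subid_comp_l_id; [exact Hp1|]. eapply le_trans; [exact H | now apply comp_subid_r_le]. }
  assert (Hr : a ⋅ q = a).
  { apply subid_comp_r_id; [exact Hq1|]. eapply le_trans; [exact H|].
    rewrite <- comp_assoc. now apply comp_subid_l_le. }
  assert (E : a = p ⋅ a ⋅ q) by now rewrite Hl, Hr.
  symmetry. transitivity (p ⋅ ⊤ ⋅ p ⋅ a ⋅ (q ⋅ ⊤ ⋅ q)).
  - rewrite <- (Hsimple a Ha) at 1. rewrite E at 1. now rewrite !comp_assoc.
  - rewrite (rect_diag p Hp), (rect_diag q Hq). now symmetry.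
Qed.

Lemma rect_atom p q : In p P -> In q P -> atom S (p ⋅ ⊤ ⋅ q).
Proof.
  intros Hp Hq. destruct (rect_has_atom p q Hp Hq) as [b [Hb Hble]].
  now rewrite <- (atom_le_rect_eq b p q).
Qed.

Lemma atom_eq_rect a : atom S a -> exists p q, In p P /\ In q P /\ a = p ⋅ ⊤ ⋅ q.
Proof.
  intro Ha. destruct (atom_is_atom_below a Ha) as [p [q [Hp [Hq E]]]].
  exists p, q. split; [exact Hp | split; [exact Hq|]].
  apply atom_le_rect_eq; auto. rewrite E. now apply atom_below_spec.
Qed.

Lemma atom_rectangle a : atom S a -> rectangle S a.
Proof.
  intro Ha. destruct (atom_eq_rect a Ha) as [p [q [_ [_ ->]]]]. unfold rectangle.
  apply le_trans with (p ⋅ (⊤ ⋅ q ⋅ ⊤ ⋅ p ⋅ ⊤) ⋅ q); [rewrite !comp_assoc; apply le_refl|].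
  apply comp_mono_l, comp_mono_r, le_top.
Qed.

Lemma atom_regular a : atom S a -> ¬¬a = a.
Proof.
  intro Ha. destruct (atom_eq_rect a Ha) as [p [q [Hp [Hq ->]]]].
  now rewrite !pc_pc_comp, pcpc_top, !subid_atom_regular.
Qed.

Lemma top_le_join_atoms : ⊤ ≤ join L.
Proof.
  destruct (top_le_join_sup_lb_pc L) as [z [Hz Htop]]; [intros a Ha; now apply atom_regular, HL|].
  replace z with ⊥ in Htop; [now rewrite sup_bot in Htop|].
  symmetry. apply NNPP. intro E. destruct (Hatomic z E) as [b [Hb Hbz]].
  apply (atom_not_le_bot b Hb). rewrite <- (inf_pc b).
  apply inf_glb; [apply le_refl | eapply le_trans; [exact Hbz | apply Hz, HL, Hb]].
Qed.

Lemma le_of_atoms x y : (forall a, atom S a -> a ≤ x -> a ≤ y) -> x ≤ y.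
Proof.
  intro H. apply le_trans with (x ⊓ join L).
  { apply inf_glb; [apply le_refl | eapply le_trans; [apply le_top | apply top_le_join_atoms]]. }
  apply inf_join_le. intros a Ha. apply HL in Ha.
  destruct (atom_inf_eq_bot_or_le a x Ha) as [E|E].
  - rewrite inf_comm, E. apply bot_le.
  - eapply le_trans; [apply inf_lb_r | auto].
Qed.

Lemma pcpc_id : relation_algebra S.
Proof.
  intro x. apply le_antisym; [|apply le_pcpc]. apply le_of_atoms. intros a Ha H.
  apply (atom_le_pc_iff a (¬x) Ha) in H.
  destruct (atom_inf_eq_bot_or_le a x Ha) as [E|E]; [exfalso; now apply H, pc_le_iff | exact E].
Qed.

Lemma one_le_join_P : 𝟏 ≤ join P.
Proof. apply le_of_atoms. intros a Ha H. now apply le_join, HP. Qed.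

Lemma rect_comp p c q : In c P -> p ⋅ ⊤ ⋅ c ⋅ (c ⋅ ⊤ ⋅ q) = p ⋅ ⊤ ⋅ q.
Proof.
  intro Hc. transitivity (p ⋅ (⊤ ⋅ (c ⋅ c) ⋅ ⊤) ⋅ q); [now rewrite !comp_assoc|].
  now rewrite (subid_idem c (in_P_subid c Hc)), (Hsimple c (in_P_atom c Hc)).
Qed.

Lemma rect_le_of_comp_neq_bot p q x : In p P -> In q P -> p ⋅ x ⋅ q <> ⊥ -> p ⋅ ⊤ ⋅ q ≤ x.
Proof.
  intros Hp Hq Hne.
  assert (Hle : p ⋅ x ⋅ q ≤ p ⋅ ⊤ ⋅ q) by (apply comp_mono_l, comp_mono_r, le_top).
  rewrite <- (proj2 (rect_atom p q Hp Hq) _ Hne Hle).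
  eapply le_trans; [apply comp_subid_r_le | apply comp_subid_l_le]; apply in_P_subid; auto.
Qed.

Lemma rect_le_comp_iff p q x y : In p P -> In q P ->
  p ⋅ ⊤ ⋅ q ≤ x ⋅ y <-> exists c, In c P /\ p ⋅ ⊤ ⋅ c ≤ x /\ c ⋅ ⊤ ⋅ q ≤ y.
Proof.
  intros Hp Hq. split.
  - intro H.
    assert (Hxy : p ⋅ ⊤ ⋅ q ≤ x ⋅ join P ⋅ y).
    { eapply le_trans; [exact H|]. rewrite <- (comp_one_r S x) at 1.
      apply comp_mono_l, comp_mono_r, one_le_join_P. }
    destruct (atom_le_comp_join _ _ _ _ (rect_atom p q Hp Hq) Hxy) as [c [Hc Hxcy]].
    assert (Hsplit : p ⋅ ⊤ ⋅ q ≤ (p ⋅ x ⋅ c) ⋅ (c ⋅ y ⋅ q)).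
    { apply le_trans with (p ⋅ (p ⋅ ⊤ ⋅ q) ⋅ q).
      { rewrite !comp_assoc, (subid_idem p), <- (comp_assoc _ (p ⋅ ⊤) q q), (subid_idem q);
          auto using le_refl, in_P_subid. }
      eapply le_trans; [apply comp_mono_l, comp_mono_r, Hxcy|].
      rewrite <- (subid_idem c (in_P_subid c Hc)) at 1. rewrite !comp_assoc. apply le_refl. }
    assert (Hne : (p ⋅ x ⋅ c) ⋅ (c ⋅ y ⋅ q) <> ⊥).
    { intro E. rewrite E in Hsplit. exact (atom_not_le_bot _ (rect_atom p q Hp Hq) Hsplit). }
    exists c. split; [exact Hc | split]; apply rect_le_of_comp_neq_bot; auto; intro E; apply Hne;
      rewrite E; [apply comp_bot_l | apply comp_bot_r].
  - intros [c [Hc [H1 H2]]]. rewrite <- (rect_comp p c q Hc). now apply comp_mono.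
Qed.

Lemma rect_le_one_iff p q : In p P -> In q P -> p ⋅ ⊤ ⋅ q ≤ 𝟏 <-> p = q.
Proof.
  intros Hp Hq. pose proof (in_P_subid p Hp) as Hp1. pose proof (in_P_subid q Hq) as Hq1. split.
  - intro H. apply NNPP; intro E. apply (atom_not_le_bot _ (rect_atom p q Hp Hq)).
    rewrite <- (atoms_disjoint p q (in_P_atom p Hp) (in_P_atom q Hq) E). apply inf_glb.
    + eapply le_trans; [|now apply subid_comp_top_inf_one_l].
      apply inf_glb; [now apply comp_subid_r_le | exact H].
    + eapply le_trans; [|now apply subid_comp_top_inf_one_r].
      apply inf_glb; [rewrite <- comp_assoc; now apply comp_subid_l_le | exact H].
  - intros <-. now rewrite rect_diag.
Qed.

Definition point : Type := {p : S | In p P}.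

Definition rel_of (x : S) (p q : point) : Prop := proj1_sig p ⋅ ⊤ ⋅ proj1_sig q ≤ x.

Lemma representation_rel_of : representation S point rel_of.
Proof.
  unfold representation, rel_of.
  split; [|split; [|split; [|split; [|split; [|split; [|split; [|split]]]]]]].
  - intros x y [p Hp] [q Hq]. now apply atom_le_sup_iff, rect_atom.
  - intros x y [p Hp] [q Hq]. apply le_inf_iff.
  - intros x [p Hp] [q Hq]. now apply atom_le_pc_iff, rect_atom.
  - intros x y [p Hp] [q Hq]. simpl. rewrite rect_le_comp_iff by auto. split.
    + intros [c [Hc H]]. now exists (exist _ c Hc).
    + intros [[c Hc] H]. now exists c.
  - intros x [p Hp] [q Hq]. simpl.
    rewrite le_conv_iff, subid_rect_conv by auto using in_P_subid. reflexivity.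
  - intros [p Hp] [q Hq]. now apply atom_not_le_bot, rect_atom.
  - intros; apply le_top.
  - intros [p Hp] [q Hq]. simpl. rewrite rect_le_one_iff by auto. split.
    + intros <-. f_equal. apply proof_irrelevance.
    + intro E. exact (f_equal (@proj1_sig _ _) E).
  - intros x y H. apply le_antisym; apply le_of_atoms; intros a Ha Hax;
      destruct (atom_eq_rect a Ha) as [p [q [Hp [Hq ->]]]];
      apply (H (exist _ p Hp) (exist _ q Hq)), Hax.
Qed.

End FinitelyManyAtoms.
End StoneRelationAlgebra.

Theorem mainTheorem7 (S : StoneRA) (C : S -> nat)
  (Hsimple : atom_simple S)
  (Hfin : finitely_many_atoms S)
  (HC : forall x : S, num_atoms_below S x (C x))
  (HC0 : forall x : S, C x = 0 <-> x = bot S)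
  (Htop : C (top S) = C (one S) * C (one S)) :
  atomic S /\ atom_rectangular S /\ relation_algebra S /\ representable S.
Proof.
  assert (Hatomic : atomic S).
  { intros x Hx. destruct (HC x) as [[|a l] [_ [Hl Hlen]]].
    - exfalso. apply Hx, HC0. now rewrite <- Hlen.
    - exists a. apply Hl. now left. }
  destruct (HC (one S)) as [P [HPnd [HP HPlen]]].
  destruct (HC (top S)) as [L [_ [HL HLlen]]].
  assert (HL' : forall a, In a L <-> atom S a).
  { intro a. rewrite HL. split; [tauto | split; [assumption | apply le_top]]. }
  assert (HLlen' : length L = length P * length P) by now rewrite HLlen, HPlen.
  split; [exact Hatomic | split; [|split]].
  - intro a. now apply (atom_rectangle S P L).
  - now apply (pcpc_id S P L).
  - exists (point S P), (rel_of S P). now apply (representation_rel_of S P L).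
Qed.
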